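(* Let $W_{24,23}$ be the $24\times 24$ matrix \[ W_{24,23}=\begin{pmatrix} 0 & 1 & \cdots & 1\\ -1 & & & \\ \vdots & & A & \\ -1 & & & \end{pmatrix}, \] where $A$ is the $23\times 23$ circulant matrix with first row $(0,1,1,1,1,-1,1,-1,1,1,-1,-1,1,1,-1,-1,1,-1,1,-1,-1,-1,-1)$. Let $C_3(W_{24,23})$ be the ternary code of length $48$ with generator matrix $(I\ \ W_{24,23})$, entries read modulo $3$. Then the lattice $A_3(C_3(W_{24,23}))$ contains a $k$-frame for every positive integer $k\ge 3$ that is not of the form $2^{m_1}5^{m_2}7^{m_3}23^{m_4}$ with $m_1,m_2,m_3,m_4$ non-negative integers.
   Context: An $N\times N$ circulant matrix with first row $(r_0,\dots,r_{N-1})$ is the matrix whose $(i,j)$ entry ($0\le i,j\le N-1$) is $r_{(j-i)\bmod N}$. Construction A: with $\rho:\mathbb{Z}_k\to\mathbb{Z}$ sending $0,1,\dots,k-1$ to $0,1,\dots,k-1$, for a $\mathbb{Z}_k$-code $C$ of length $N$ set $A_k(C)=\frac{1}{\sqrt{k}}\{\rho(C)+k\mathbb{Z}^N\}$. A $t$-frame of a lattice in dimension $N$ is a set of $N$ lattice vectors $f_1,\dots,f_N$ with $(f_i,f_j)=t\,\delta_{i,j}$. *)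

From HB Require Import structures.
From mathcomp Require Import all_boot all_order all_algebra.
Set Implicit Arguments. Unset Strict Implicit. Unset Printing Implicit Defensive.
Import Order.TTheory GRing.Theory Num.Theory.
Local Open Scope ring_scope.

Definition A_row : seq int :=
  [:: 0; 1; 1; 1; 1; -1; 1; -1; 1; 1; -1; -1; 1; 1; -1; -1; 1; -1; 1; -1; -1; -1; -1].

Definition circulant (N : nat) (r : seq int) : 'M[int]_N :=
  \matrix_(i < N, j < N) nth 0 r ((j + N - i) %% N)%N.

Definition A23 : 'M[int]_23 := circulant 23 A_row.

Definition W24 : 'M[int]_24 :=
  \matrix_(i < 24, j < 24)
    if (i == 0%N :> nat) then (if (j == 0%N :> nat) then 0 else 1)
    else if (j == 0%N :> nat) then -1
    else A23 (inord i.-1) (inord j.-1).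

Definition GenC3 : 'M['Z_3]_(24, 24 + 24) :=
  row_mx 1%:M (map_mx (fun z : int => z%:~R) W24).

Definition C3W : {set 'rV['Z_3]_(24 + 24)} :=
  [set c | [exists m : 'rV['Z_3]_24, c == m *m GenC3]].

Definition rho3 (a : 'Z_3) : int := (nat_of_ord a)%:Z.

Definition A3 (R : rcfType) (N : nat) (C : {set 'rV['Z_3]_N}) : 'rV[R]_N -> Prop :=
  fun x => exists c, c \in C /\ exists w : 'rV[int]_N,
    x = (Num.sqrt 3)^-1 *: map_mx (fun z : int => z%:~R)
                               (map_mx rho3 c + 3 *: w).

Definition dotR (R : rcfType) (N : nat) (x y : 'rV[R]_N) : R :=
  \sum_(l < N) x 0 l * y 0 l.

Definition has_frame (R : rcfType) (N : nat) (L : 'rV[R]_N -> Prop) (t : nat) : Prop :=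
  exists f : 'I_N -> 'rV[R]_N,
    (forall i, L (f i)) /\
    (forall i j, dotR (f i) (f j) = if i == j then t%:R else 0).

From HB Require Import structures.
From mathcomp Require Import all_boot all_order all_algebra zify ring.
Set Implicit Arguments. Unset Strict Implicit. Unset Printing Implicit Defensive.
Import Order.TTheory GRing.Theory Num.Theory.
Local Open Scope ring_scope.

(* The frame consists of the 48 rows, scaled by 1/sqrt 3, of the integer matrix
     V = [[P, Q], [-Q^T, P^T]],  P = t0 + t1 W,  Q = t2 + t3 J + t4 K + t5 L,
   where W = W_{24,23} and J, K, L are skew signed permutation matrices that
   commute with W and anticommute pairwise, so that (t3 J + t4 K + t5 L)^2 =
   -(t3^2 + t4^2 + t5^2).  Since moreover W^T = -W and W W^T = 23, the blocks
   P and Q commute, P P^T = t0^2 + 23 t1^2 and Q Q^T = t2^2 + t3^2 + t4^2 + t5^2,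
   whence V V^T = (t0^2 + 23 t1^2 + t2^2 + t3^2 + t4^2 + t5^2) I.
   If 3 divides t0, t3, t4, t5 and t2 = t1 (mod 3), then modulo 3
     V = t1 [[W, 1], [-1, -W]] = t1 [W; -1] (I W)
   because W^2 = -23 = 1, so the rows of V lie in C_3(W).  By Lagrange's
   four-square theorem, 3k is the norm of such a t for every k >= 3 other than
   4, 5, 7 and 10, which are all of the excluded form. *)

(** * Lagrange's four-square theorem *)

Definition sum4sq (n : int) : Prop :=
  exists a b c d : int, n = a ^+ 2 + b ^+ 2 + c ^+ 2 + d ^+ 2.

Lemma euler_four_squares (R : comNzRingType) (a b c d e f g h : R) :
  (a ^+ 2 + b ^+ 2 + c ^+ 2 + d ^+ 2) * (e ^+ 2 + f ^+ 2 + g ^+ 2 + h ^+ 2) =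
  (a * e + b * f + c * g + d * h) ^+ 2 + (a * f - b * e + c * h - d * g) ^+ 2 +
  (a * g - c * e + d * f - b * h) ^+ 2 + (a * h - d * e + b * g - c * f) ^+ 2.
Proof. ring. Qed.

Lemma sum4sqM m n : sum4sq m -> sum4sq n -> sum4sq (m * n).
Proof.
move=> [a [b [c [d ->]]]] [e [f [g [h ->]]]].
by rewrite euler_four_squares; do 4!eexists.
Qed.

Lemma centered_divz (x m : int) : 0 < m ->
  exists q y : int, x = y + q * m /\ - m < 2 * y <= m.
Proof.
move=> m_gt0; have := divz_eq x m; have := ltz_pmod x m_gt0.
have := modz_ge0 x (lt0r_neq0 m_gt0).
set q := (x %/ m)%Z; set y := (x %% m)%Z => y_ge0 y_lt Ex.
have [y_le|y_gt] := leP (2 * y) m.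
- by exists q, y; split; lia.
- by exists (q + 1), (y - m); split; lia.
Qed.

Lemma centered_sqr_le (y m : int) : - m < 2 * y <= m -> (2 * y) ^+ 2 <= m ^+ 2.
Proof. by move=> bnd; nia. Qed.

Lemma centered_sqr_eq (y m : int) : - m < 2 * y <= m -> (2 * y) ^+ 2 = m ^+ 2 -> 2 * y = m.
Proof. by move=> bnd /eqP; rewrite eqf_sqr => /orP[] /eqP; lia. Qed.

Lemma centered_sum_sqr_le (y1 y2 y3 y4 m : int) :
  - m < 2 * y1 <= m -> - m < 2 * y2 <= m -> - m < 2 * y3 <= m -> - m < 2 * y4 <= m ->
  y1 ^+ 2 + y2 ^+ 2 + y3 ^+ 2 + y4 ^+ 2 <= m ^+ 2.
Proof.
move=> /centered_sqr_le L1 /centered_sqr_le L2 /centered_sqr_le L3 /centered_sqr_le L4.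
by move: L1 L2 L3 L4; rewrite !exprMn; lia.
Qed.

Lemma centered_sum_sqr_eq (y1 y2 y3 y4 m : int) :
  - m < 2 * y1 <= m -> - m < 2 * y2 <= m -> - m < 2 * y3 <= m -> - m < 2 * y4 <= m ->
  y1 ^+ 2 + y2 ^+ 2 + y3 ^+ 2 + y4 ^+ 2 = m ^+ 2 ->
  [/\ 2 * y1 = m, 2 * y2 = m, 2 * y3 = m & 2 * y4 = m].
Proof.
move=> B1 B2 B3 B4 E.
have := centered_sqr_le B1; have := centered_sqr_le B2.
have := centered_sqr_le B3; have := centered_sqr_le B4.
rewrite !exprMn => L4 L3 L2 L1.
by split; apply: centered_sqr_eq; rewrite // exprMn; lia.
Qed.

Lemma sum_sqr_eq0 (y1 y2 y3 y4 : int) :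
  y1 ^+ 2 + y2 ^+ 2 + y3 ^+ 2 + y4 ^+ 2 = 0 -> [/\ y1 = 0, y2 = 0, y3 = 0 & y4 = 0].
Proof.
have := sqr_ge0 y1; have := sqr_ge0 y2; have := sqr_ge0 y3; have := sqr_ge0 y4.
move=> S4 S3 S2 S1 E.
by split; apply/eqP; rewrite -sqrf_eq0; apply/eqP; lia.
Qed.

Lemma prime_neq_mul (p m : nat) (s : int) : prime p -> (1 < m < p)%N ->
  p%:Z <> m%:Z * s.
Proof.
move=> /primeP[_ dvd_p] m_bounds Ep.
have s_ge0 : 0 <= s by nia.
have /dvd_p/orP[] : (m %| p)%N.
  by apply/dvdnP; exists `|s|%N; apply/eqP; rewrite -eqz_nat /=; lia.
all: by move/eqP; lia.
Qed.

(* Euler's identity for x and the residues x - q m, all of whose terms are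
   multiples of m. *)
Lemma sum4sq_residues (m p r x1 x2 x3 x4 q1 q2 q3 q4 : int) : m != 0 ->
  m * p = x1 ^+ 2 + x2 ^+ 2 + x3 ^+ 2 + x4 ^+ 2 ->
  (x1 - q1 * m) ^+ 2 + (x2 - q2 * m) ^+ 2 + (x3 - q3 * m) ^+ 2 + (x4 - q4 * m) ^+ 2
    = m * r ->
  sum4sq (r * p).
Proof.
move=> m_neq0 Ex Ey.
exists (p - (x1 * q1 + x2 * q2 + x3 * q3 + x4 * q4)),
  (x2 * q1 - x1 * q2 + x4 * q3 - x3 * q4),
  (x3 * q1 - x1 * q3 + x2 * q4 - x4 * q2),
  (x3 * q2 - x2 * q3 + x4 * q1 - x1 * q4).
apply: (@mulfI _ (m ^+ 2)); first by rewrite expf_neq0.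
have -> : m ^+ 2 * (r * p) = (m * p) * (m * r) by ring.
rewrite -Ey Ex euler_four_squares.
have -> : x1 * (x1 - q1 * m) + x2 * (x2 - q2 * m) + x3 * (x3 - q3 * m) + x4 * (x4 - q4 * m)
          = m * (p - (x1 * q1 + x2 * q2 + x3 * q3 + x4 * q4)).
  by rewrite [m * (_ - _)]mulrBr Ex; ring.
ring.
Qed.

Lemma sum4sq_descent (p m : nat) : prime p -> (1 < m < p)%N ->
  sum4sq (m * p)%N -> exists2 r : nat, (0 < r < m)%N & sum4sq (r * p)%N.
Proof.
move=> pr_p m_bounds [x1 [x2 [x3 [x4 Ex]]]]; move: Ex; rewrite PoszM => Ex.
have m_gt0 : 0 < m%:Z by lia.
have [q1 [y1 [E1 B1]]] := centered_divz x1 m_gt0.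
have [q2 [y2 [E2 B2]]] := centered_divz x2 m_gt0.
have [q3 [y3 [E3 B3]]] := centered_divz x3 m_gt0.
have [q4 [y4 [E4 B4]]] := centered_divz x4 m_gt0.
set r := p%:Z - 2 * (x1 * q1 + x2 * q2 + x3 * q3 + x4 * q4)
         + m%:Z * (q1 ^+ 2 + q2 ^+ 2 + q3 ^+ 2 + q4 ^+ 2).
have Ey : y1 ^+ 2 + y2 ^+ 2 + y3 ^+ 2 + y4 ^+ 2 = m%:Z * r.
  have -> : m%:Z * r = m%:Z * p%:Z - 2 * m%:Z * (x1 * q1 + x2 * q2 + x3 * q3 + x4 * q4)
         + m%:Z ^+ 2 * (q1 ^+ 2 + q2 ^+ 2 + q3 ^+ 2 + q4 ^+ 2) by rewrite /r; ring.
  by rewrite Ex E1 E2 E3 E4; ring.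
have r_ge0 : 0 <= r by rewrite -(pmulr_rge0 _ m_gt0) -Ey !addr_ge0 ?sqr_ge0.
have r_le_m : r <= m%:Z by rewrite -(ler_pM2l m_gt0) -expr2 -Ey centered_sum_sqr_le.
(* r = 0 or r = m would force all residues y to be 0, resp. m/2, and then m
   would divide p. *)
have [r0|r_neq0] := eqVneq r 0.
  exfalso; apply: (prime_neq_mul (s := q1 ^+ 2 + q2 ^+ 2 + q3 ^+ 2 + q4 ^+ 2) pr_p m_bounds).
  move: Ey; rewrite r0 mulr0 => /sum_sqr_eq0[Y1 Y2 Y3 Y4].
  apply: (@mulfI _ m%:Z); first exact: lt0r_neq0.
  by rewrite Ex E1 E2 E3 E4 Y1 Y2 Y3 Y4; ring.
have [rm|r_neq_m] := eqVneq r m%:Z.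
  exfalso; apply: (prime_neq_mul (s := 1 + q1 * (q1 + 1) + q2 * (q2 + 1)
                                     + q3 * (q3 + 1) + q4 * (q4 + 1)) pr_p m_bounds).
  move: Ey; rewrite rm -expr2 => /(centered_sum_sqr_eq B1 B2 B3 B4)[F1 F2 F3 F4].
  have m2 : m%:Z = 2 * y1 by rewrite F1.
  have [Y2 Y3 Y4] : [/\ y2 = y1, y3 = y1 & y4 = y1].
    by split; apply: (@mulfI _ 2); rewrite // ?F1 ?F2 ?F3 ?F4.
  apply: (@mulfI _ m%:Z); first exact: lt0r_neq0.
  by rewrite Ex E1 E2 E3 E4 Y2 Y3 Y4 m2; ring.
exists `|r|%N; first by clear -r_ge0 r_neq0 r_le_m r_neq_m; lia.
rewrite PoszM gez0_abs //.
apply: (@sum4sq_residues _ _ _ _ _ _ _ q1 q2 q3 q4 (lt0r_neq0 m_gt0) Ex).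
by rewrite -Ey E1 E2 E3 E4; ring.
Qed.

Lemma Fp_sqr_inj (p x y : nat) : prime p -> (2 * x < p)%N -> (2 * y < p)%N ->
  (x%:R : 'F_p) ^+ 2 = y%:R ^+ 2 -> x = y.
Proof.
move=> pr_p x_lt y_lt /eqP; rewrite -subr_eq0 subr_sqr mulf_eq0 subr_eq0 -natrD.
case/orP=> [/eqP/(congr1 (@nat_of_ord _)) | ].
  by rewrite !val_Fp_nat // !modn_small //; lia.
by rewrite -(dvdn_pcharf (pchar_Fp pr_p)) => /dvdn_leq; lia.
Qed.

(* Pigeonhole: the (p + 1)/2 squares x^2 and the (p + 1)/2 values -1 - y^2,
   for 0 <= x, y <= (p - 1)/2, cannot all be distinct in F_p. *)
Lemma exists_sqr_add_sqr_add1 (p : nat) : prime p -> odd p ->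
  exists x y : nat, [/\ (2 * x < p)%N, (2 * y < p)%N & (p %| x ^ 2 + y ^ 2 + 1)%N].
Proof.
move=> pr_p odd_p; set h := p.+1./2.
have lt_p (i : 'I_h) : (2 * i < p)%N by have := ltn_ord i; rewrite /h; lia.
pose f (i : 'I_h) : 'F_p := i%:R ^+ 2.
pose g (i : 'I_h) : 'F_p := - 1 - i%:R ^+ 2.
have f_inj : injective f.
  by move=> i j /Fp_sqr_inj => /(_ pr_p (lt_p i) (lt_p j)) /val_inj.
have g_inj : injective g.
  by move=> i j /addrI /oppr_inj /Fp_sqr_inj => /(_ pr_p (lt_p i) (lt_p j)) /val_inj.
have : (0 < #|[set f i | i in 'I_h] :&: [set g i | i in 'I_h]|)%N.
  have := cardsUI [set f i | i in 'I_h] [set g i | i in 'I_h].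
  have := max_card ([set f i | i in 'I_h] :|: [set g i | i in 'I_h]).
  by rewrite !card_imset // card_Fp // card_ord /h; lia.
case/card_gt0P=> _ /setIP[/imsetP[x _ ->] /imsetP[y _ fg]].
exists x, y; split; rewrite ?lt_p // (dvdn_pcharf (pchar_Fp pr_p)) !natrD !natrX.
by move: fg; rewrite /f /g => ->; rewrite subrK addNr.
Qed.

Lemma sum4sq_prime_of_multiple (p m : nat) : prime p -> (0 < m < p)%N ->
  sum4sq (m * p)%N -> sum4sq p.
Proof.
move=> pr_p; elim/ltn_ind: m => m IH m_bounds Smp.
have [m1|m_neq1] := eqVneq m 1%N; first by rewrite m1 mul1n in Smp.
have [|r r_bounds Srp] := sum4sq_descent pr_p _ Smp; first by lia.
by apply: (IH r) Srp; lia.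
Qed.

Lemma sum4sq_prime (p : nat) : prime p -> sum4sq p.
Proof.
move=> pr_p; have [->|odd_p] := even_prime pr_p; first by exists 1, 1, 0, 0.
have [x [y [x_lt y_lt /dvdnP[m Em]]]] := exists_sqr_add_sqr_add1 pr_p odd_p.
have p_gt2 := odd_prime_gt2 odd_p pr_p.
have Lx := ltn_mul x_lt x_lt; have Ly := ltn_mul y_lt y_lt.
apply: (@sum4sq_prime_of_multiple p m) => //; first by nia.
by exists x%:Z, y%:Z, 1, 0; rewrite -Em; lia.
Qed.

Lemma sum4sq_nat (n : nat) : sum4sq n.
Proof.
elim/ltn_ind: n => -[_|[_|n IH]]; first by exists 0, 0, 0, 0.
  by exists 1, 0, 0, 0.
have pr_d := @pdiv_prime n.+2 isT.
rewrite -(divnK (pdiv_dvd n.+2)) PoszM; apply: sum4sqM; last exact: sum4sq_prime.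
by apply: IH; rewrite ltn_Pdiv ?prime_gt1.
Qed.

(** * Orthogonal designs from a quaternion triple *)

Section MatrixCommutation.
Variables (R : comPzRingType) (n : nat).
Implicit Types (X Y Z : 'M[R]_n) (a b : R).

Definition anticomm_mx X Y := X *m Y = - (Y *m X).

Lemma anticomm_mxZ a b X Y : anticomm_mx X Y -> anticomm_mx (a *: X) (b *: Y).
Proof.
by rewrite /anticomm_mx -!scalemxAl -!scalemxAr !scalerA mulrC => ->; rewrite scalerN.
Qed.

Lemma anticomm_mxDl X Y Z : anticomm_mx X Z -> anticomm_mx Y Z -> anticomm_mx (X + Y) Z.
Proof. by rewrite /anticomm_mx mulmxDl mulmxDr opprD => -> ->. Qed.

Lemma sqr_mx_add_anticomm X Y : anticomm_mx X Y -> (X + Y) *m (X + Y) = X *m X + Y *m Y.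
Proof. by rewrite /anticomm_mx mulmxDl !mulmxDr => ->; rewrite addrA subrK. Qed.

Lemma sqr_mxZ_unit a X : X *m X = - 1%:M -> (a *: X) *m (a *: X) = - (a ^+ 2)%:M.
Proof.
by move=> XX; rewrite -scalemxAl -scalemxAr scalerA XX scalerN scale_scalar_mx mulr1 expr2.
Qed.

Lemma comm_mxZr a X Y : comm_mx X Y -> comm_mx X (a *: Y).
Proof. by rewrite /comm_mx -scalemxAl -scalemxAr => ->. Qed.

Lemma comm_scalar_add a b X Y : comm_mx X Y -> comm_mx (a%:M + X) (b%:M + Y).
Proof.
move=> XY; apply: comm_mxD; first exact: comm_mx_scalar.
by apply/comm_mx_sym/comm_mxD; [exact: comm_mx_scalar | exact: comm_mx_sym].
Qed.

End MatrixCommutation.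

Section QuaternionTriple.
Variables (R : comPzRingType) (n : nat) (J K L : 'M[R]_n).
Hypotheses (trJ : J^T = - J) (trK : K^T = - K) (trL : L^T = - L).
Hypotheses (sqrJ : J *m J = - 1%:M) (sqrK : K *m K = - 1%:M) (sqrL : L *m L = - 1%:M).
Hypotheses (antiJK : anticomm_mx J K) (antiJL : anticomm_mx J L) (antiKL : anticomm_mx K L).

Lemma tr_quat a b c : (a *: J + b *: K + c *: L)^T = - (a *: J + b *: K + c *: L).
Proof. by rewrite !raddfD /= !linearZ /= trJ trK trL !scalerN. Qed.

Lemma sqr_quat a b c :
  (a *: J + b *: K + c *: L) *m (a *: J + b *: K + c *: L) = - (a ^+ 2 + b ^+ 2 + c ^+ 2)%:M.
Proof.
rewrite sqr_mx_add_anticomm; last by apply: anticomm_mxDl; apply: anticomm_mxZ.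
rewrite sqr_mx_add_anticomm; last exact: anticomm_mxZ.
by rewrite !sqr_mxZ_unit // !raddfD.
Qed.

Lemma comm_quat (W : 'M[R]_n) a b c : comm_mx J W -> comm_mx K W -> comm_mx L W ->
  comm_mx (a *: J + b *: K + c *: L) W.
Proof. by rewrite /comm_mx !mulmxDl !mulmxDr -!scalemxAl -!scalemxAr => -> -> ->. Qed.

End QuaternionTriple.

Section OrthBlock.
Variables (R : comPzRingType) (n : nat).
Implicit Types (P Q X : 'M[R]_n) (a x s : R).

Definition orth_block P Q : 'M[R]_(n + n) := block_mx P Q (- Q^T) P^T.

Lemma orth_block_mul_tr P Q s : comm_mx P Q ->
  P *m P^T + Q *m Q^T = s%:M -> P^T *m P + Q^T *m Q = s%:M ->
  orth_block P Q *m (orth_block P Q)^T = s%:M.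
Proof.
move=> PQ sPQ sPQ'; rewrite /orth_block tr_block_mx raddfN /= !trmxK mulmx_block.
rewrite scalar_mx_block !mulmxN !mulNmx opprK PQ addNr sPQ [Q^T *m Q + _]addrC sPQ'.
by rewrite -!trmx_mul PQ addNr.
Qed.

Lemma scalar_add_skew_mul_tr a x X : X^T = - X -> X *m X = - x%:M ->
  (a%:M + X) *m (a%:M + X)^T = (a ^+ 2 + x)%:M /\
  (a%:M + X)^T *m (a%:M + X) = (a ^+ 2 + x)%:M.
Proof.
move=> trX XX; rewrite raddfD /= tr_scalar_mx trX.
have sqr_diff Y : Y *m Y = - x%:M -> (a%:M + Y) *m (a%:M - Y) = (a ^+ 2 + x)%:M.
  move=> YY; rewrite mulmxDl !mulmxBr (scalar_mxC a Y) YY -scalar_mxM.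
  by rewrite addrA subrK opprK -expr2 raddfD.
split; first exact: sqr_diff.
by rewrite -{2}[X]opprK sqr_diff // mulNmx mulmxN opprK.
Qed.

End OrthBlock.

(** * The matrices W, J, K, L *)

(* [\matrix_] is locked, so concrete matrices are given by their entry
   functions, on which identities are decided by evaluation. *)
Section MatrixOfFunction.
Variables (R : pzRingType) (n : nat).
Implicit Types (f g : nat -> nat -> R).

Definition mx_of_fn f : 'M[R]_n := \matrix_(i, j) f i j.

Definition mul_fn f g i j : R := foldr (fun l s => f i l * g l j + s) 0 (iota 0 n).

Definition eq_fn f g : bool :=
  all (fun i => all (fun j => f i j == g i j) (iota 0 n)) (iota 0 n).

Lemma mx_of_fn_eq f g : eq_fn f g -> mx_of_fn f = mx_of_fn g.
Proof.
move=> fg; apply/matrixP=> i j; rewrite !mxE; apply/eqP.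
move: fg => /allP/(_ i); rewrite mem_iota add0n ltn_ord => /(_ isT) /allP/(_ j).
by rewrite mem_iota add0n ltn_ord => /(_ isT).
Qed.

Lemma mul_mx_of_fn f g : mx_of_fn f *m mx_of_fn g = mx_of_fn (mul_fn f g).
Proof.
apply/matrixP=> i j; rewrite !mxE /mul_fn.
under eq_bigr => l _ do rewrite !mxE.
rewrite -(big_mkord xpredT (fun l => f i l * g l j)) /index_iota subn0.
by elim: (iota 0 n) => [|l s IH]; rewrite ?big_nil ?big_cons ?IH.
Qed.

Lemma tr_mx_of_fn f : (mx_of_fn f)^T = mx_of_fn (fun i j => f j i).
Proof. by apply/matrixP=> i j; rewrite !mxE. Qed.

Lemma opp_mx_of_fn f : - mx_of_fn f = mx_of_fn (fun i j => - f i j).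
Proof. by apply/matrixP=> i j; rewrite !mxE. Qed.

Lemma scalar_mx_of_fn a : a%:M = mx_of_fn (fun i j => if i == j then a else 0).
Proof. by apply/matrixP=> i j; rewrite !mxE mulrb. Qed.

End MatrixOfFunction.

Definition W24_fn (i j : nat) : int :=
  if i == 0%N then (if j == 0%N then 0 else 1)
  else if j == 0%N then -1 else nth 0 A_row ((j.-1 + 23 - i.-1) %% 23)%N.

Lemma W24E : W24 = mx_of_fn 24 W24_fn.
Proof.
apply/matrixP=> i j; rewrite /W24 /W24_fn !mxE.
case: (i == 0%N :> nat) => //; case: (j == 0%N :> nat) => //.
by rewrite !inordK //; [have := ltn_ord i | have := ltn_ord j]; lia.
Qed.

Definition signed_perm_fn (perm : seq nat) (sign : seq int) (i j : nat) : int :=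
  if nth 0%N perm i == j then nth 0 sign i else 0.

Definition J24 := mx_of_fn 24 (signed_perm_fn
  [:: 1; 0; 23; 12; 16; 18; 10; 20; 14; 21; 6; 17; 3; 22; 8; 19; 4; 11; 5; 15; 7; 9; 13; 2]%N
  [:: 1; -1; -1; -1; -1; -1; 1; -1; 1; -1; -1; 1; 1; -1; -1; 1; 1; -1; 1; -1; 1; 1; 1; 1]).

Definition K24 := mx_of_fn 24 (signed_perm_fn
  [:: 7; 20; 18; 15; 10; 23; 16; 0; 21; 14; 4; 22; 19; 17; 9; 3; 6; 13; 2; 12; 1; 8; 11; 5]%N
  [:: 1; 1; -1; 1; 1; 1; 1; -1; -1; -1; -1; -1; 1; -1; 1; -1; -1; 1; 1; -1; -1; 1; 1; -1]).

Definition L24 := mx_of_fn 24 (signed_perm_fn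
  [:: 20; 7; 5; 19; 6; 2; 4; 1; 9; 8; 16; 13; 15; 11; 21; 12; 10; 22; 23; 3; 0; 14; 17; 18]%N
  [:: 1; -1; 1; -1; 1; -1; -1; 1; 1; -1; -1; 1; 1; -1; 1; -1; 1; 1; 1; 1; -1; -1; -1; -1]).

Ltac mx_of_fn_compute :=
  rewrite /anticomm_mx /comm_mx ?W24E ?tr_mx_of_fn ?mul_mx_of_fn ?scalar_mx_of_fn
          ?opp_mx_of_fn;
  apply: mx_of_fn_eq; vm_compute.

Lemma W24_skew : W24^T = - W24.
Proof. by mx_of_fn_compute. Qed.

Lemma W24_sqr : W24 *m W24 = - 23%:M.
Proof. by mx_of_fn_compute. Qed.

Lemma JKL_skew : [/\ J24^T = - J24, K24^T = - K24 & L24^T = - L24].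
Proof. by split; mx_of_fn_compute. Qed.

Lemma JKL_sqr : [/\ J24 *m J24 = - 1%:M, K24 *m K24 = - 1%:M & L24 *m L24 = - 1%:M].
Proof. by split; mx_of_fn_compute. Qed.

Lemma JKL_anticomm : [/\ anticomm_mx J24 K24, anticomm_mx J24 L24 & anticomm_mx K24 L24].
Proof. by split; mx_of_fn_compute. Qed.

Lemma JKL_comm_W24 : [/\ comm_mx J24 W24, comm_mx K24 W24 & comm_mx L24 W24].
Proof. by split; mx_of_fn_compute. Qed.

(** * Frames in Construction A *)

Lemma pchar_Z3 : 3%N \in [pchar 'Z_3].
Proof. exact: pchar_Fp. Qed.

Lemma rho3_intr (z : int) : (3 %| z - rho3 z%:~R)%Z.
Proof. by rewrite (dvdz_pcharf pchar_Z3) rmorphB /= /rho3 -pmulrn natr_Zp subrr. Qed.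

Lemma A3_intmx (R : rcfType) (N : nat) (C : {set 'rV['Z_3]_N}) (v : 'rV[int]_N) :
  map_mx (fun z : int => z%:~R) v \in C ->
  @A3 R N C ((Num.sqrt 3)^-1 *: map_mx (fun z : int => z%:~R) v).
Proof.
move=> vC; exists (map_mx (fun z : int => z%:~R) v); split => //.
exists (map_mx (fun z => ((z - rho3 z%:~R) %/ 3)%Z) v).
congr (_ *: _); apply/matrixP=> i j; rewrite !mxE.
by rewrite mulrC divzK ?rho3_intr // addrC subrK.
Qed.

Lemma has_frame_of_intmx (R : rcfType) (N : nat) (C : {set 'rV['Z_3]_N})
    (V : 'M[int]_N) (k : nat) :
  (forall i, map_mx (fun z : int => z%:~R) (row i V) \in C) ->
  V *m V^T = (3 * k)%:R%:M -> has_frame (@A3 R N C) k.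
Proof.
move=> VC VVt; pose s : R := (Num.sqrt 3)^-1.
exists (fun i => s *: map_mx (fun z : int => z%:~R) (row i V)); split.
  by move=> i; apply: A3_intmx.
move=> i j; rewrite /dotR.
under eq_bigr => l _ do rewrite !mxE mulrACA -intrM.
rewrite -mulr_sumr -rmorph_sum /=.
have -> : \sum_(l < N) V i l * V j l = (V *m V^T) i j.
  by rewrite !mxE; apply: eq_bigr => l _; rewrite mxE.
have s2 : s * s = 3^-1 by rewrite -invfM -expr2 sqr_sqrtr // ler0n.
rewrite VVt mxE s2; case: eqP => _ /=; last by rewrite mulr0.
by rewrite mulr1n natz -!pmulrn natrM mulKf // pnatr_eq0.
Qed.

Definition design24 (t0 t1 t2 t3 t4 t5 : int) : 'M[int]_(24 + 24) :=
  orth_block (t0%:M + t1 *: W24) (t2%:M + (t3 *: J24 + t4 *: K24 + t5 *: L24)).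

Lemma design24_mul_tr t0 t1 t2 t3 t4 t5 :
  design24 t0 t1 t2 t3 t4 t5 *m (design24 t0 t1 t2 t3 t4 t5)^T =
  (t0 ^+ 2 + 23 * t1 ^+ 2 + t2 ^+ 2 + t3 ^+ 2 + t4 ^+ 2 + t5 ^+ 2)%:M.
Proof.
have [trJ trK trL] := JKL_skew; have [sqrJ sqrK sqrL] := JKL_sqr.
have [antiJK antiJL antiKL] := JKL_anticomm; have [JW KW LW] := JKL_comm_W24.
have trW : (t1 *: W24)^T = - (t1 *: W24) by rewrite linearZ /= W24_skew scalerN.
have sqrW : (t1 *: W24) *m (t1 *: W24) = - (23 * t1 ^+ 2)%:M.
  by rewrite -scalemxAl -scalemxAr scalerA W24_sqr scalerN scale_scalar_mx mulrC expr2.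
have [PPt PtP] := scalar_add_skew_mul_tr t0 trW sqrW.
have [QQt QtQ] := scalar_add_skew_mul_tr t2 (tr_quat trJ trK trL t3 t4 t5)
                    (sqr_quat sqrJ sqrK sqrL antiJK antiJL antiKL t3 t4 t5).
apply: orth_block_mul_tr.
- by apply/comm_scalar_add/comm_mx_sym/comm_mxZr; apply: comm_quat.
- by rewrite PPt QQt -raddfD /=; congr scalar_mx; ring.
- by rewrite PtP QtQ -raddfD /=; congr scalar_mx; ring.
Qed.

Lemma design24_rows_in_C3W (a t1 t2 b c d : int) (i : 'I_(24 + 24)) : (3 %| t2 - t1)%Z ->
  map_mx (fun z : int => z%:~R) (row i (design24 (3 * a) t1 t2 (3 * b) (3 * c) (3 * d)))
    \in C3W.
Proof.
move=> t21.
have three0 (z : int) : ((3 * z)%:~R : 'Z_3) = 0.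
  by apply/eqP; rewrite -(dvdz_pcharf pchar_Z3) dvdz_mulr.
have t2E : (t2%:~R : 'Z_3) = t1%:~R.
  by apply/eqP; rewrite -subr_eq0 -rmorphB /= -(dvdz_pcharf pchar_Z3).
set W' := map_mx (fun z : int => z%:~R : 'Z_3) W24.
have W'2 : W' *m W' = 1%:M.
  by rewrite -map_mxM W24_sqr map_mxN map_scalar_mx -raddfN /=; congr scalar_mx; apply: val_inj.
have W'tr : W'^T = - W' by rewrite map_trmx -map_mxN -W24_skew.
rewrite map_row.
have -> : map_mx (fun z : int => z%:~R) (design24 (3 * a) t1 t2 (3 * b) (3 * c) (3 * d)) =
          t1%:~R *: (col_mx W' (- 1%:M) *m GenC3).
  rewrite /design24 /orth_block /GenC3 mul_col_row map_block_mx scale_block_mx.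
  rewrite !map_mxN -!map_trmx !(map_mxD, map_mxZ, map_scalar_mx) /= !three0 t2E -/W'.
  rewrite !scale0r !addr0 raddf0 add0r W'2 mulmx1 mulNmx mul1mx linearZ /= W'tr.
  by rewrite tr_scalar_mx mulNmx mul1mx !scalerN scale_scalar_mx mulr1.
by rewrite scalemxAl row_mul inE; apply/existsP; eexists.
Qed.

Lemma norm_form_repr (k : nat) : (3 <= k)%N -> k \notin [:: 4; 5; 7; 10]%N ->
  exists a t1 t2 b c d : int, (3 %| t2 - t1)%Z /\
    (3 * a) ^+ 2 + 23 * t1 ^+ 2 + t2 ^+ 2 + (3 * b) ^+ 2 + (3 * c) ^+ 2 + (3 * d) ^+ 2
    = (3 * k)%N.
Proof.
rewrite !inE => k_ge3 k_notin; have k_eq := divn_eq k 3.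
have := ltn_mod k 3; case: (k %% 3)%N k_eq => [|[|[|//]]] k_eq _.
- have [a [b [c [d E]]]] := sum4sq_nat (k %/ 3).
  exists a, 0, 0, b, c, d; split; first by rewrite subr0 dvdz0.
  by rewrite !exprMn; lia.
- have [a [b [c [d E]]]] := sum4sq_nat (k %/ 3 - 4).
  exists a, 1, 4, b, c, d; split; first by [].
  by rewrite !exprMn; lia.
- have [a [b [c [d E]]]] := sum4sq_nat (k %/ 3 - 2).
  exists a, 1, 1, b, c, d; split; first by rewrite subrr dvdz0.
  by rewrite !exprMn; lia.
Qed.

Theorem lemma5p1 (R : rcfType) (k : nat) :
  (3 <= k)%N ->
  ~ (exists m1 m2 m3 m4 : nat, k = (2 ^ m1 * 5 ^ m2 * 7 ^ m3 * 23 ^ m4)%N) ->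
  has_frame (@A3 R _ C3W) k.
Proof.
move=> k_ge3 not_form.
have k_notin : k \notin [:: 4; 5; 7; 10]%N.
  apply/negP; rewrite !inE => /or4P[] /eqP k_eq; apply: not_form; rewrite k_eq.
  - by exists 2%N, 0%N, 0%N, 0%N.
  - by exists 0%N, 1%N, 0%N, 0%N.
  - by exists 0%N, 0%N, 1%N, 0%N.
  - by exists 1%N, 1%N, 0%N, 0%N.
have [a [t1 [t2 [b [c [d [t21 norm]]]]]]] := norm_form_repr k_ge3 k_notin.
apply: (@has_frame_of_intmx R _ _ (design24 (3 * a) t1 t2 (3 * b) (3 * c) (3 * d))).
  by move=> i; apply: design24_rows_in_C3W.
by rewrite design24_mul_tr norm natz.
Qed.
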